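(* Let $L$ be a Lie superalgebra of the type $S(t)$. Then $\overline{exp}^{gr}(L)=\limsup_{n\to\infty}\sqrt[n]{c_n^{gr}(L)}\le 2t$ for even $t$, and $\overline{exp}^{gr}(L)\le 2t-1$ for odd $t$.
   Context: $F$ is a field of characteristic zero. For a $\mathbb Z_2$-graded algebra $L=L_0\oplus L_1$, let $P_{k,n-k}$ be the space of multilinear nonassociative polynomials in even variables $x_1,\dots,x_k$ and odd variables $y_1,\dots,y_{n-k}$ of the absolutely free $\mathbb Z_2$-graded algebra, $Id^{gr}(L)$ the ideal of graded identities of $L$, $c_{k,n-k}(L)=\dim P_{k,n-k}/(P_{k,n-k}\cap Id^{gr}(L))$, and $c_n^{gr}(L)=\sum_{k=0}^n\binom nk c_{k,n-k}(L)$. Superalgebra $S(t)$, $t\ge 2$: take $R=UT_t(F)$ with an involution $\ast$, either orthogonal $e_{ij}^\circ=e_{t+1-j,t+1-i}$, or (for $t=2m$) symplectic $X^s=DX^\circ D^{-1}$, $D=\mathrm{diag}(E,-E)$ with $E$ the $m\times m$ identity. With $R^\pm$ the symmetric/skew elements, $S(t)=\{\begin{pmatrix} x& y\\ z& -x^\ast\end{pmatrix}: x\in R, y\in R^+, z\in R^-\}$, even part block-diagonal, odd part block-off-diagonal, with the supercommutator product. *)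

From HB Require Import structures.
From mathcomp Require Import all_boot all_order all_algebra.
From mathcomp Require Import boolp classical_sets reals ereal sequences exp.
Set Implicit Arguments. Unset Strict Implicit. Unset Printing Implicit Defensive.
Import Order.TTheory GRing.Theory Num.Theory.
Local Open Scope ring_scope.

(* A nonassociative monomial: a binary bracketing with leaves labelled by
   variable indices.  In P_{k,n-k}, index i < k stands for the even variable
   x_{i+1}, and index i with k <= i < n for the odd variable y_{i-k+1}. *)
Inductive tree := Leaf of nat | Node of tree & tree.

(* all bracketings of the word s (in the given left-to-right order);
   [fuel] must be >= size s *)
Fixpoint bracketings (fuel : nat) (s : seq nat) : seq tree :=
  match fuel with
  | 0 => [::]
  | fuel'.+1 =>
    match s with
    | [:: x] => [:: Leaf x]
    | _ => flatten [seq [seq Node l r | l <- bracketings fuel' (take i s),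
                                       r <- bracketings fuel' (drop i s)]
                   | i <- iota 1 (size s).-1]
    end
  end.

(* The basis of multilinear monomials of degree n in the variables 0..n-1:
   every bracketing of every permutation of 0..n-1 (no repetitions). *)
Definition mons (n : nat) : seq tree :=
  flatten [seq bracketings n p | p <- permutations (iota 0 n)].

Section Eval.
Variables (F : fieldType) (N : nat).

Fixpoint tparity (k : nat) (m : tree) : bool :=
  match m with
  | Leaf i => (k <= i)%N
  | Node l r => tparity k l (+) tparity k r
  end.

Definition scomm (pa pb : bool) (a b : 'M[F]_N) : 'M[F]_N :=
  a *m b - (-1) ^+ (pa && pb) *: (b *m a).

Fixpoint teval (k : nat) (sub : nat -> 'M[F]_N) (m : tree) : 'M[F]_N :=
  match m with
  | Leaf i => sub i
  | Node l r => scomm (tparity k l) (tparity k r) (teval k sub l) (teval k sub r)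
  end.

(* A polynomial of P_{k,n-k} is given by its coordinate row vector in the
   monomial basis [mons n]; it is a graded identity of the superalgebra
   L = L0 (+) L1 iff it vanishes under all graded substitutions. *)
Definition is_gr_identity (L0 L1 : 'M[F]_N -> Prop) (k n : nat)
    (f : 'rV[F]_(size (mons n))) : Prop :=
  forall sub : nat -> 'M[F]_N,
    (forall i, i < k -> L0 (sub i))%N ->
    (forall i, k <= i < n -> L1 (sub i))%N ->
    \sum_(j < size (mons n)) f 0 j *: teval k sub (nth (Leaf 0) (mons n) j) = 0.

(* c_{k,n-k}(L) = dim P_{k,n-k} / (P_{k,n-k} \cap Id^gr(L)):
   the largest d such that some d polynomials of P_{k,n-k} are linearly
   independent modulo Id^gr(L). *)
Definition codim_kn (L0 L1 : 'M[F]_N -> Prop) (k n : nat) : nat :=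
  \max_(d < (size (mons n)).+1 |
        `[< exists A : 'M[F]_(d, size (mons n)),
              forall c : 'rV[F]_d, @is_gr_identity L0 L1 k n (c *m A) -> c = 0 >])
     (d : nat).

Definition gr_codim (L0 L1 : 'M[F]_N -> Prop) (n : nat) : nat :=
  (\sum_(k < n.+1) 'C(n, k) * codim_kn L0 L1 k n)%N.

End Eval.

Inductive inv_kind := Orthogonal | Symplectic.

Section St.
Variables (F : fieldType) (t : nat).

Definition is_UT (X : 'M[F]_t) : Prop := forall i j : 'I_t, (j < i)%N -> X i j = 0.

Definition inv_orth (X : 'M[F]_t) : 'M[F]_t := \matrix_(i, j) X (rev_ord j) (rev_ord i).

Definition Dsymp : 'M[F]_t := \matrix_(i, j) (if i == j then (if (i < t./2)%N then 1 else -1) else 0).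

(* symplectic involution X -> D X° D^{-1} (D^{-1} = D) *)
Definition inv_symp (X : 'M[F]_t) : 'M[F]_t := Dsymp *m inv_orth X *m Dsymp.

Definition invol (kd : inv_kind) : 'M[F]_t -> 'M[F]_t :=
  match kd with Orthogonal => inv_orth | Symplectic => inv_symp end.

Definition St_even (kd : inv_kind) (M : 'M[F]_(t + t)) : Prop :=
  exists x : 'M[F]_t, is_UT x /\ M = block_mx x 0 0 (- invol kd x).

Definition St_odd (kd : inv_kind) (M : 'M[F]_(t + t)) : Prop :=
  exists y z : 'M[F]_t,
    [/\ is_UT y, invol kd y = y, is_UT z, invol kd z = - z & M = block_mx 0 y z 0].

End St.

From HB Require Import structures.
From mathcomp Require Import all_boot all_order all_algebra.
From mathcomp Require Import boolp classical_sets reals ereal sequences exp.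
From mathcomp Require Import topology normedtype.
From mathcomp Require Import zify ring lra.
Set Implicit Arguments. Unset Strict Implicit. Unset Printing Implicit Defensive.
Import Order.TTheory GRing.Theory Num.Theory.
Local Open Scope ring_scope.

(* Give the index set of the (t+t)x(t+t) matrices a level function with values
   below 2t for which every element of S(t) has entries only from lower to
   higher-or-equal levels.  An element then splits into a level-preserving
   ("flat") part, ranging over a space of dimension t in the even case and
   2 * floor(t/2) in the odd case, plus a combination of level-raising matrix
   units.  A monomial evaluated on such basis elements vanishes as soon as 2t of
   its factors are level-raising, so c_{k,n-k} is at most (2t)^2 times the number
   of basis substitutions with fewer than 2t raising factors.  Weighting each
   raising factor by a small dl > 0 bounds this number by
   dl^(1-2t) (t + K dl)^k (2 floor(t/2) + K dl)^(n-k) for a constant K, and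
   letting dl -> 0 gives the exponent bound t + 2 floor(t/2). *)

Fixpoint tree_eqb (m m' : tree) : bool :=
  match m, m' with
  | Leaf i, Leaf j => i == j
  | Node l r, Node l' r' => tree_eqb l l' && tree_eqb r r'
  | _, _ => false
  end.

Lemma tree_eqP : Equality.axiom tree_eqb.
Proof.
elim=> [i|l IHl r IHr] [j|l' r'] /=; try by constructor.
  by apply: (iffP eqP) => [->|[]].
apply: (iffP andP) => [[/IHl -> /IHr ->]//|[<- <-]].
by split; [apply/IHl|apply/IHr].
Qed.

HB.instance Definition _ := hasDecEq.Build tree tree_eqP.

Fixpoint leaves (m : tree) : seq nat :=
  match m with Leaf i => [:: i] | Node l r => leaves l ++ leaves r end.

Lemma leaves_bracketings fuel s m : m \in bracketings fuel s -> leaves m = s.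
Proof.
elim: fuel s m => [|fuel IH] s m //=.
case: s => [|x [|y s]]; [by []|by rewrite inE => /eqP ->|].
move=> /flattenP [_ /mapP [i _ ->]] /allpairsP [[l r] [/= /IH eq_l /IH eq_r ->]].
by rewrite /= eq_l eq_r cat_take_drop.
Qed.

Lemma perm_leaves_mons n j : (j < size (mons n))%N ->
  perm_eq (leaves (nth (Leaf 0) (mons n) j)) (iota 0 n).
Proof.
move=> lt_j; have /flattenP [_ /mapP [p p_perm ->]] := mem_nth (Leaf 0) lt_j.
by move=> /leaves_bracketings ->; rewrite mem_permutations in p_perm.
Qed.

Section Filtration.
Variables (F : fieldType) (N : nat) (lvl : 'I_N -> nat).

Definition raises (d : nat) (X : 'M[F]_N) : Prop :=
  forall a b, X a b != 0 -> (lvl a + d <= lvl b)%N.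

Lemma raises0 d : raises d 0.
Proof. by move=> a b; rewrite mxE eqxx. Qed.

Lemma raisesD d X Y : raises d X -> raises d Y -> raises d (X + Y).
Proof.
move=> rX rY a b; rewrite mxE.
by have [/rX //|/negPn/eqP ->] := boolP (X a b != 0); rewrite add0r => /rY.
Qed.

Lemma raisesZ d c X : raises d X -> raises d (c *: X).
Proof. by move=> rX a b; rewrite mxE mulf_eq0 negb_or => /andP [_ /rX]. Qed.

Lemma raisesN d X : raises d X -> raises d (- X).
Proof. by move=> rX a b; rewrite mxE oppr_eq0 => /rX. Qed.

Lemma raises_mulmx d e X Y : raises d X -> raises e Y -> raises (d + e) (X *m Y).
Proof.
move=> rX rY a b; rewrite mxE.
have [c /= |/(_ _)/negPn/eqP XY0] := pickP (fun c => X a c * Y c b != 0); last first.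
  by rewrite big1 ?eqxx // => c _; apply: XY0.
rewrite mulf_eq0 negb_or => /andP [/rX le_ac /rY le_cb] _.
by rewrite addnA (leq_trans _ le_cb) // leq_add2r.
Qed.

Lemma raises_scomm d e p q X Y : raises d X -> raises e Y -> raises (d + e) (scomm p q X Y).
Proof.
move=> rX rY; apply: raisesD; first exact: raises_mulmx.
by apply/raisesN/raisesZ; rewrite addnC; apply: raises_mulmx.
Qed.

Lemma raises_teval k sub (w : nat -> nat) m :
  (forall i, raises (w i) (sub i)) -> raises (\sum_(i <- leaves m) w i) (teval k sub m).
Proof.
move=> r_sub; elim: m => [i|l IHl r IHr] /=; first by rewrite big_seq1.
by rewrite big_cat; apply: raises_scomm.
Qed.

Lemma raises_eq0 Lm d X : (forall a, lvl a < Lm)%N -> (Lm <= d)%N -> raises d X -> X = 0.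
Proof.
move=> lt_lvl le_Lm rX; apply/matrixP => a b; rewrite mxE.
apply/eqP/negP => /negP /rX; rewrite leqNgt.
by rewrite (leq_trans (lt_lvl b)) ?(leq_trans le_Lm) ?leq_addl.
Qed.

Definition flatpart (X : 'M[F]_N) : 'M[F]_N :=
  \matrix_(a, b) if lvl a == lvl b then X a b else 0.

Lemma flatpart_sum (I : finType) (c : I -> F) (Y : I -> 'M[F]_N) :
  flatpart (\sum_i c i *: Y i) = \sum_i c i *: flatpart (Y i).
Proof.
apply/matrixP => a b; rewrite mxE !summxE; case: ifP => eq_ab.
  by apply: eq_bigr => i _; rewrite !mxE eq_ab.
by rewrite big1 // => i _; rewrite !mxE eq_ab mulr0.
Qed.

Lemma raises_flatpart X : raises 0 (flatpart X).
Proof. by move=> a b; rewrite mxE addn0; case: (lvl a =P lvl b) => [->|_]; rewrite ?eqxx. Qed.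

Definition jump (q : 'I_N * 'I_N) : 'M[F]_N :=
  if (lvl q.1 < lvl q.2)%N then delta_mx q.1 q.2 else 0.

Lemma raises_jump q : raises 1 (jump q).
Proof.
rewrite /jump; case: ltnP => [lt_q|_]; last exact: raises0.
move=> a b; rewrite mxE addn1.
by have [->|_] := eqVneq a q.1; have [->|_] := eqVneq b q.2; rewrite /= ?andbF ?eqxx.
Qed.

Lemma raises_sum_jump X : raises 0 X -> X = flatpart X + \sum_q X q.1 q.2 *: jump q.
Proof.
move=> rX; apply/matrixP => a b; rewrite !mxE summxE (bigD1 (a, b)) //= big1; last first.
  move=> [a' b'] /= ne_ab; rewrite /jump mxE; case: ifP => _; rewrite ?mxE ?mulr0 //.
  have [ea|_] := eqVneq a a'; have [eb|_] := eqVneq b b'; rewrite ?mulr0 //.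
  by rewrite ea eb eqxx in ne_ab.
rewrite /jump /= addr0; case: (ltngtP (lvl a) (lvl b)) => [_|lt_ba|_]; rewrite ?mxE ?eqxx.
- by rewrite mulr1 add0r.
- have /negPn/eqP -> : ~~ (X a b != 0) by apply/negP => /rX; rewrite addn0 leqNgt lt_ba.
  by rewrite mulr0 addr0.
- by rewrite mulr0 addr0.
Qed.

End Filtration.

Arguments jump {F N} lvl q.

Section MultilinearVanishing.
Variables (R : nzRingType) (U W : lmodType R) (n : nat) (Phi : (nat -> U) -> W).
Hypothesis Phi_local : forall s s', (forall i, (i < n)%N -> s i = s' i) -> Phi s = Phi s'.
Hypothesis Phi_linear : forall s j a x y, (j < n)%N ->
  Phi [eta s with j |-> a *: x + y] = a *: Phi [eta s with j |-> x] + Phi [eta s with j |-> y].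

Lemma multilinear_sum s j (B : finType) (c : B -> R) (x : B -> U) : (j < n)%N ->
  Phi [eta s with j |-> \sum_b c b *: x b] = \sum_b c b *: Phi [eta s with j |-> x b].
Proof.
move=> lt_jn; have Phi0 : Phi [eta s with j |-> 0] = 0.
  have := Phi_linear s 1 0 0 lt_jn; rewrite !scale1r addr0 => Phi0_double.
  by apply: (@addrI _ (Phi [eta s with j |-> 0])); rewrite addr0 -Phi0_double.
apply: (big_rec2 (fun x y => Phi [eta s with j |-> x] = y)) => // b x' y _ <-.
exact: Phi_linear.
Qed.

Lemma multilinear_span_eq0 (B : finType) (e : nat -> B -> U) :
  (forall s, (forall i, (i < n)%N -> exists b, s i = e i b) -> Phi s = 0) ->
  forall s, (forall i, (i < n)%N -> exists c : B -> R, s i = \sum_b c b *: e i b) ->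
  Phi s = 0.
Proof.
move=> Phi_e.
suff Phi_mixed j s :
    (forall i, (i < n)%N -> (i < j)%N -> exists c : B -> R, s i = \sum_b c b *: e i b) ->
    (forall i, (j <= i < n)%N -> exists b, s i = e i b) -> Phi s = 0.
  move=> s s_span; apply: (Phi_mixed n) => [i lt_in _|i /andP [le_ni lt_in]].
    exact: s_span.
  by move: (leq_trans lt_in le_ni); rewrite ltnn.
elim: j s => [|j IHj] s s_span s_e; first by apply: Phi_e => i; apply: s_e.
have [le_nj|lt_jn] := leqP n j.
  apply: IHj => [i lt_in lt_ij|i /andP [le_ji lt_in]]; first exact: s_span i lt_in (ltnW lt_ij).
  by move: (leq_trans le_nj le_ji); rewrite leqNgt lt_in.
rewrite (Phi_local (s' := [eta s with j |-> s j])); last by move=> i _ /=; case: eqP => [->|].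
have [c ->] := s_span j lt_jn (ltnSn j).
rewrite multilinear_sum // big1 // => b _; rewrite IHj ?scaler0 //.
  by move=> i lt_in lt_ij /=; rewrite (ltn_eqF lt_ij); apply: s_span => //; apply: ltnW.
move=> i /andP [le_ji lt_in] /=; case: eqP => [->|/eqP ne_ij]; first by exists b.
by apply: s_e; rewrite lt_in andbT ltn_neqAle eq_sym ne_ij.
Qed.
End MultilinearVanishing.

Section Evaluation.
Variables (F : fieldType) (N : nat).
Implicit Types (sub : nat -> 'M[F]_N) (X Y Z : 'M[F]_N).

Lemma teval_local k sub sub' m :
  (forall i, i \in leaves m -> sub i = sub' i) -> teval k sub m = teval k sub' m.
Proof.
elim: m => [i|l IHl r IHr] /= eq_sub; first by apply: eq_sub; rewrite inE.
by rewrite IHl ?IHr // => i i_m; apply: eq_sub; rewrite mem_cat i_m ?orbT.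
Qed.

Lemma scommDl p q a X Y Z : scomm p q (a *: X + Y) Z = a *: scomm p q X Z + scomm p q Y Z.
Proof.
rewrite /scomm mulmxDl mulmxDr -scalemxAl -scalemxAr scalerDr !scalerBr !scalerA mulrC.
by rewrite opprD addrACA.
Qed.

Lemma scommDr p q a X Y Z : scomm p q Z (a *: X + Y) = a *: scomm p q Z X + scomm p q Z Y.
Proof.
rewrite /scomm mulmxDl mulmxDr -scalemxAl -scalemxAr scalerDr !scalerBr !scalerA mulrC.
by rewrite opprD addrACA.
Qed.

Lemma teval_linear k sub j a X Y m : count_mem j (leaves m) = 1%N ->
  teval k [eta sub with j |-> a *: X + Y] m =
  a *: teval k [eta sub with j |-> X] m + teval k [eta sub with j |-> Y] m.
Proof.
elim: m => [i|l IHl r IHr] /=; first by rewrite addn0; case: eqP.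
have upd_free m Z Z' : j \notin leaves m ->
    teval k [eta sub with j |-> Z] m = teval k [eta sub with j |-> Z'] m.
  by move=> j_m; apply: teval_local => i i_m /=; case: eqP => // eq_ij; rewrite -eq_ij i_m in j_m.
rewrite count_cat; case cnt_l: (count_mem j (leaves l)) => [|[|//]] /= cnt_r.
  have j_l : j \notin leaves l by apply/count_memPn.
  by rewrite IHr // (upd_free l _ X) // (upd_free l Y X) // scommDr.
have j_r : j \notin leaves r by apply/count_memPn; case: cnt_r.
by rewrite IHl // (upd_free r _ X) // (upd_free r Y X) // scommDl.
Qed.

Definition peval k n (f : 'rV[F]_(size (mons n))) sub : 'M[F]_N :=
  \sum_(j < size (mons n)) f 0 j *: teval k sub (nth (Leaf 0) (mons n) j).

Arguments peval k n f sub : clear implicits.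

Lemma peval_local k n f sub sub' :
  (forall i, (i < n)%N -> sub i = sub' i) -> peval k n f sub = peval k n f sub'.
Proof.
move=> eq_sub; apply: eq_bigr => j _; congr (_ *: _); apply: teval_local => i i_m.
by move: i_m; rewrite (perm_mem (perm_leaves_mons (ltn_ord j))) mem_iota => /eq_sub.
Qed.

Lemma peval_linear k n f sub j a X Y : (j < n)%N ->
  peval k n f [eta sub with j |-> a *: X + Y] =
  a *: peval k n f [eta sub with j |-> X] + peval k n f [eta sub with j |-> Y].
Proof.
move=> lt_jn; rewrite /peval scaler_sumr -big_split; apply: eq_bigr => i _ /=.
rewrite teval_linear ?scalerDr ?scalerA 1?mulrC //.
rewrite (permP (perm_leaves_mons (ltn_ord i))).
by rewrite count_uniq_mem ?iota_uniq // mem_iota lt_jn.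
Qed.

End Evaluation.

Arguments peval {F N} k n f sub.

Lemma prod_threshold (R : comPzSemiRingType) (h : bool -> R) (k n : nat) : (k <= n)%N ->
  \prod_(i < n) h (k <= i)%N = h false ^+ k * h true ^+ (n - k).
Proof.
move=> le_kn; rewrite -(big_mkord xpredT (fun i => h (k <= i)%N)).
rewrite (big_cat_nat (leq0n k) le_kn) /=.
rewrite (@eq_big_nat _ _ _ 0 k _ (fun=> h false)) => [|i /andP [_ lt_ik]]; last first.
  by rewrite leqNgt lt_ik.
rewrite (@eq_big_nat _ _ _ k n _ (fun=> h true)) => [|i /andP [le_ki _]]; last by rewrite le_ki.
by rewrite !prodr_const_nat subn0.
Qed.

Section Counting.
Variables (R : realFieldType) (dl : R).
Hypotheses (dl_ge0 : 0 <= dl) (dl_le1 : dl <= 1).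

(* Rankin's trick: each [tau] of total weight [< L] contributes
   [dl ^+ L.-1 <= dl ^+ (weight of tau)], and the sum of the latter over all [tau]
   factors into a product. *)
Lemma card_light_le (B : finType) (n L : nat) (w : 'I_n -> B -> nat) :
  #|[pred tau : {ffun 'I_n -> B} | (\sum_i w i (tau i) < L)%N]|%:R * dl ^+ L.-1
    <= \prod_i \sum_b dl ^+ w i b.
Proof.
rewrite bigA_distr_bigA /= mulr_natl -sumr_const.
rewrite [leRHS](bigID [pred tau : {ffun 'I_n -> B} | (\sum_i w i (tau i) < L)%N]) /=.
apply: ler_wpDr; first by apply: sumr_ge0 => tau _; apply: prodr_ge0 => i _; apply: exprn_ge0.
apply: ler_sum => tau light_tau; rewrite prodrXr ler_wiXn2l //.
by rewrite -ltnS prednK // (leq_ltn_trans _ light_tau).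
Qed.

Lemma sum_expr_le (B : finType) (w : B -> nat) :
  \sum_b dl ^+ w b <= #|[pred b | w b == 0%N]|%:R + #|B|%:R * dl.
Proof.
apply: (@le_trans _ _ (\sum_b ((w b == 0%N)%:R + dl))).
  apply: ler_sum => b _; case: eqP => [->|/eqP w_ne0]; first by rewrite expr0 lerDl.
  by rewrite add0r -{2}(expr1 dl) ler_wiXn2l // lt0n.
rewrite big_split /= sumr_const mulr_natl -natr_sum lerD2r ler_nat.
by apply: eq_leq; rewrite -sum1_card [RHS]big_mkcond; apply: eq_bigr => b _; rewrite inE.
Qed.
End Counting.

Section CodimensionBound.
Variables (F : fieldType) (N : nat) (lvl : 'I_N -> nat) (Lm : nat).
Hypothesis lvl_lt : forall a, (lvl a < Lm)%N.
Variables (L0 L1 : 'M[F]_N -> Prop) (B : finType).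
Variables (basis : bool -> B -> 'M[F]_N) (weight : bool -> B -> nat).
Hypothesis raises_basis : forall p b, raises lvl (weight p b) (basis p b).
Hypothesis span_L0 : forall X, L0 X -> exists c : B -> F, X = \sum_b c b *: basis false b.
Hypothesis span_L1 : forall X, L1 X -> exists c : B -> F, X = \sum_b c b *: basis true b.

Section Shape.
Variables (k n : nat).

Definition light :=
  [pred tau : {ffun 'I_n -> B} | (\sum_(i < n) weight (k <= i) (tau i) < Lm)%N].

Definition basis_sub (tau : {ffun 'I_n -> B}) (i : nat) : 'M[F]_N :=
  if insub i is Some i' then basis (k <= i)%N (tau i') else 0.

Lemma peval_heavy_eq0 f tau : tau \notin light -> peval k n f (basis_sub tau) = 0.
Proof.
rewrite inE -leqNgt => heavy; apply: big1 => j _.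
pose w i := if insub i is Some i' then weight (k <= i)%N (tau i') else 0%N.
have raises_sub i : raises lvl (w i) (basis_sub tau i).
  by rewrite /w /basis_sub; case: insubP => [i' _ _|_]; [apply: raises_basis|apply: raises0].
rewrite (raises_eq0 lvl_lt _ (raises_teval (k := k) raises_sub)) ?scaler0 //.
have iota_n : iota 0 n = index_iota 0 n by rewrite /index_iota subn0.
rewrite (perm_big _ (perm_leaves_mons (ltn_ord j))) iota_n big_mkord.
by under eq_bigr do rewrite /w valK.
Qed.

Lemma gr_identity_light f :
  (forall tau, tau \in light -> peval k n f (basis_sub tau) = 0) -> is_gr_identity L0 L1 k f.
Proof.
move=> f_light sub sub_L0 sub_L1.
apply: (multilinear_span_eq0 (@peval_local _ _ k n f) (@peval_linear _ _ k n f)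
          (e := fun i => basis (k <= i)%N)) => [s s_basis|i lt_in].
  have [tau tauP] : exists tau : {ffun 'I_n -> B}, forall i : 'I_n, s i = basis (k <= i)%N (tau i).
    have [g gP] := fin_all_exists (fun i : 'I_n => s_basis i (ltn_ord i)).
    by exists [ffun i => g i] => i; rewrite ffunE.
  rewrite (@peval_local _ _ k n f _ (basis_sub tau)) => [|i lt_in]; last first.
    by rewrite /basis_sub insubT /= (tauP (Ordinal lt_in)).
  by have [/f_light|/peval_heavy_eq0] := boolP (tau \in light).
by case: leqP => [le_ki|lt_ik]; [apply/span_L1/sub_L1; rewrite le_ki|apply/span_L0/sub_L0].
Qed.

Lemma codim_kn_le : (codim_kn L0 L1 k n <= #|light| * (N * N))%N.
Proof.
apply/bigmax_leqP => d /asboolP [A A_indep].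
pose I := ('I_#|light| * 'I_N * 'I_N)%type.
pose Phi : 'M[F]_(size (mons n), #|{: I}|) := \matrix_(j, c)
   (let: (tau, a, b) := enum_val c in
    teval k (basis_sub (enum_val tau)) (nth (Leaf 0) (mons n) j) a b).
have Phi_ker f : f *m Phi = 0 -> is_gr_identity L0 L1 k f.
  move=> fPhi0; apply: gr_identity_light => tau tau_light.
  apply/matrixP => a b; rewrite /peval summxE [RHS]mxE.
  pose col := enum_rank ((enum_rank_in tau_light tau, a, b) : I).
  have := congr1 (fun M : 'M_(1, #|{: I}|) => M 0 col) fPhi0.
  rewrite !mxE => Phi_eq0; rewrite -[RHS]Phi_eq0; apply: eq_bigr => j _.
  by rewrite !mxE enum_rankK /= enum_rankK_in.
suff /eqP <- : row_free (A *m Phi).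
  by rewrite (leq_trans (rank_leq_col _)) // !card_prod !card_ord mulnA.
rewrite -kermx_eq0; apply/eqP/row_matrixP => i; rewrite row0.
by apply/A_indep/Phi_ker; rewrite -mulmxA -row_mul mulmx_ker row0.
Qed.

End Shape.

Lemma gr_codim_le (R : realFieldType) (dl : R) n : 0 <= dl -> dl <= 1 ->
  (gr_codim L0 L1 n)%:R * dl ^+ Lm.-1 <=
  (N * N)%:R * (#|[pred b | weight false b == 0%N]|%:R + #|[pred b | weight true b == 0%N]|%:R
                + 2%:R * #|B|%:R * dl) ^+ n.
Proof.
move=> dl_ge0 dl_le1; pose g p := #|[pred b | weight p b == 0%N]|%:R + #|B|%:R * dl.
rewrite (_ : _ + _ + _ = g true + g false); last by rewrite /g; ring.
rewrite exprDn /gr_codim natr_sum mulr_suml mulr_sumr; apply: ler_sum => k _.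
have le_kn : (k <= n)%N by rewrite -ltnS.
have light_le : #|light k n|%:R * dl ^+ Lm.-1 <= g false ^+ k * g true ^+ (n - k).
  rewrite -prod_threshold //.
  apply: le_trans (card_light_le dl_ge0 dl_le1 Lm (fun i : 'I_n => weight (k <= i)%N)) _.
  apply: ler_prod => i _; rewrite sumr_ge0 => [|b _]; last exact: exprn_ge0.
  exact: sum_expr_le.
apply: (@le_trans _ _ ('C(n, k)%:R * (N * N)%:R * (#|light k n|%:R * dl ^+ Lm.-1))).
  rewrite natrM -!mulrA ler_wpM2l // mulrA -natrM ler_wpM2r ?exprn_ge0 // ler_nat mulnC.
  exact: codim_kn_le.
rewrite [leRHS](_ : _ = 'C(n, k)%:R * (N * N)%:R * (g false ^+ k * g true ^+ (n - k))).
  by rewrite ler_wpM2l ?mulr_ge0.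
ring.
Qed.

End CodimensionBound.

Section Asymptotics.
Variable R : realType.

Lemma limn_esup_le_eventually (u : nat -> R) (l : R) N0 :
  (forall n, (N0 <= n)%N -> u n <= l) -> (limn_esup (fun n => (u n)%:E) <= l%:E)%E.
Proof.
move=> u_le; rewrite limn_esup_lim; apply: lime_le; first exact: is_cvg_esups.
exists N0 => // m /= le_m; apply: ge_ereal_sup => _ [n /= le_mn <-].
by rewrite lee_fin u_le // (leq_trans le_m le_mn).
Qed.

Lemma bernoulli_le (x : R) n : 0 <= x -> 1 + n%:R * x <= (1 + x) ^+ n.
Proof.
move=> x_ge0; elim: n => [|n IHn]; first by rewrite mul0r addr0 expr0.
rewrite exprS; apply: le_trans (ler_wpM2l (addr_ge0 ler01 x_ge0) IHn).
have n_ge0 : 0 <= n%:R :> R by [].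
by have := mulr_ge0 n_ge0 (mulr_ge0 x_ge0 x_ge0); rewrite -natr1; nra.
Qed.

Lemma geometric_dominated (C a b : R) : 0 < a -> a < b ->
  exists N0, forall n, (N0 <= n)%N -> C * a ^+ n <= b ^+ n.
Proof.
move=> a_gt0 lt_ab; pose rho := b / a.
have rho1_gt0 : 0 < rho - 1 by rewrite subr_gt0 ltr_pdivlMr // mul1r.
exists (Num.truncn (C / (rho - 1))).+1 => n le_n.
have -> : b = rho * a by rewrite /rho mulfVK // gt_eqF.
rewrite exprMn ler_wpM2r ?exprn_ge0 ?(ltW a_gt0) //.
have := bernoulli_le n (ltW rho1_gt0); rewrite addrCA subrr addr0 => bern; apply: le_trans bern.
have : C / (rho - 1) < n%:R.
  by apply: lt_le_trans (truncnS_gt _) _; rewrite ler_nat.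
rewrite ltr_pdivrMr //; lra.
Qed.

Lemma powR_invn_le (x b : R) n : (0 < n)%N -> 0 <= x -> 0 <= b -> x <= b ^+ n ->
  x `^ n%:R^-1 <= b.
Proof.
move=> n_gt0 x_ge0 b_ge0 le_xb; apply: le_trans (_ : (b ^+ n) `^ n%:R^-1 <= b).
  by apply: ge0_ler_powR; rewrite ?invr_ge0 // nnegrE // exprn_ge0.
by rewrite -powR_mulrn // -powRrM mulfV ?powRr1 // pnatr_eq0 -lt0n.
Qed.

Lemma limn_esup_root_le (c : nat -> nat) (b C K : R) (L : nat) :
  0 <= b -> 0 <= C -> 0 <= K ->
  (forall dl n, 0 < dl -> dl <= 1 -> (c n)%:R * dl ^+ L <= C * (b + K * dl) ^+ n) ->
  (limn_esup (fun n => (((c n)%:R : R) `^ n%:R^-1)%:E) <= b%:E)%E.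
Proof.
move=> b_ge0 C_ge0 K_ge0 c_le; apply/lee_addgt0Pr => e e_gt0.
pose dl := Num.min 1 (e / (2 * (K + 1))).
have dl_gt0 : 0 < dl by rewrite lt_min ltr01 /= divr_gt0 // mulr_gt0 // ltr_wpDl.
have dl_le1 : dl <= 1 by rewrite ge_min lexx.
have dl_le : dl <= e / (2 * (K + 1)) by rewrite ge_min lexx orbT.
clearbody dl.
have Kdl_le : b + K * dl <= b + e / 2.
  by move: dl_le; rewrite lerD2l ler_pdivlMr ?mulr_gt0 ?ltr_wpDl // ler_pdivlMr //; nra.
have [N0 geom] : exists N0, forall n, (N0 <= n)%N ->
    C / dl ^+ L * (b + e / 2) ^+ n <= (b + e) ^+ n.
  by apply: geometric_dominated; lra.
rewrite -EFinD; apply: (limn_esup_le_eventually (N0 := N0.+1)) => n le_n.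
apply: powR_invn_le; [exact: leq_trans (ltn0Sn N0) le_n|exact: ler0n|lra|].
apply: le_trans (geom n (ltnW le_n)).
rewrite mulrAC ler_pdivlMr ?exprn_gt0 //; apply: le_trans (c_le _ _ dl_gt0 dl_le1) _.
rewrite ler_wpM2l // lerXn2r // ?nnegrE; last lra.
by rewrite addr_ge0 // mulr_ge0 // ltW.
Qed.

End Asymptotics.

Section FlatJumpBasis.
Variables (F : fieldType) (N : nat) (lvl : 'I_N -> nat).
Variables (B0 B1 : finType) (flat0 : B0 -> 'M[F]_N) (flat1 : B1 -> 'M[F]_N).

(* Both parities share one index type: the flat directions of the other parity are
   zero matrices, given weight 1 so that they do not count as flat. *)
Definition flat_jump_basis (p : bool) (b : (B0 + B1) + 'I_N * 'I_N) : 'M[F]_N :=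
  match b with
  | inl (inl i) => if p then 0 else flatpart lvl (flat0 i)
  | inl (inr i) => if p then flatpart lvl (flat1 i) else 0
  | inr q => jump lvl q
  end.

Definition flat_jump_weight (p : bool) (b : (B0 + B1) + 'I_N * 'I_N) : nat :=
  match b with inl (inl _) => p | inl (inr _) => ~~ p | inr _ => 1 end.

Lemma raises_flat_jump_basis p b : raises lvl (flat_jump_weight p b) (flat_jump_basis p b).
Proof.
by case: b => [[i|i]|q]; case: p;
  first [exact: raises0 | exact: raises_flatpart | exact: raises_jump].
Qed.

Lemma card_flat_jump_weight0 p :
  #|[pred b | flat_jump_weight p b == 0%N]| = if p then #|B1| else #|B0|.
Proof.
rewrite -sum1_card; under eq_bigl do rewrite inE.
rewrite !big_sumType /= [X in (_ + X)%N]big_pred0 // addn0.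
case: p => /=; rewrite -sum1_card.
  by rewrite [X in (X + _)%N]big_pred0 // add0n; apply: eq_bigl.
by rewrite [X in (_ + X)%N]big_pred0 // addn0; apply: eq_bigl.
Qed.

Lemma flat_jump_decomp (I : finType) (Y : I -> 'M[F]_N) (c : I -> F) X :
  raises lvl 0 X -> flatpart lvl X = flatpart lvl (\sum_i c i *: Y i) ->
  X = \sum_i c i *: flatpart lvl (Y i) + \sum_q X q.1 q.2 *: jump lvl q.
Proof. by move=> rX flatX; rewrite {1}(raises_sum_jump rX) flatX flatpart_sum. Qed.

Lemma span_flat_jump0 X (c : B0 -> F) :
  raises lvl 0 X -> flatpart lvl X = flatpart lvl (\sum_i c i *: flat0 i) ->
  exists d, X = \sum_b d b *: flat_jump_basis false b.
Proof.
move=> rX flatX.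
exists (fun b => match b with inl (inl i) => c i | inl (inr _) => 0 | inr q => X q.1 q.2 end).
rewrite !big_sumType /= [X in _ + X + _]big1 => [|i _]; last by rewrite scaler0.
by rewrite addr0; apply: flat_jump_decomp.
Qed.

Lemma span_flat_jump1 X (c : B1 -> F) :
  raises lvl 0 X -> flatpart lvl X = flatpart lvl (\sum_i c i *: flat1 i) ->
  exists d, X = \sum_b d b *: flat_jump_basis true b.
Proof.
move=> rX flatX.
exists (fun b => match b with inl (inl _) => 0 | inl (inr i) => c i | inr q => X q.1 q.2 end).
rewrite !big_sumType /= [X in X + _ + _]big1 => [|i _]; last by rewrite scaler0.
by rewrite add0r; apply: flat_jump_decomp.
Qed.

End FlatJumpBasis.

Theorem limn_esup_gr_codim_le (F : fieldType) (R : realType) (N : nat) (lvl : 'I_N -> nat)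
    (Lm : nat) (L0 L1 : 'M[F]_N -> Prop) (B0 B1 : finType)
    (flat0 : B0 -> 'M[F]_N) (flat1 : B1 -> 'M[F]_N) :
  (forall a, (lvl a < Lm)%N) ->
  (forall X, L0 X ->
     raises lvl 0 X /\ exists c, flatpart lvl X = flatpart lvl (\sum_i c i *: flat0 i)) ->
  (forall X, L1 X ->
     raises lvl 0 X /\ exists c, flatpart lvl X = flatpart lvl (\sum_i c i *: flat1 i)) ->
  (limn_esup (fun n => ((gr_codim L0 L1 n)%:R `^ n%:R^-1 : R)%:E) <= (#|B0| + #|B1|)%:R%:E)%E.
Proof.
move=> lvl_lt flat_L0 flat_L1.
have span_L0 X : L0 X -> exists d, X = \sum_b d b *: flat_jump_basis lvl flat0 flat1 false b.
  by case/flat_L0 => rX [c flatX]; apply: span_flat_jump0 flatX.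
have span_L1 X : L1 X -> exists d, X = \sum_b d b *: flat_jump_basis lvl flat0 flat1 true b.
  by case/flat_L1 => rX [c flatX]; apply: span_flat_jump1 flatX.
pose K := #|{: (B0 + B1) + 'I_N * 'I_N}|.
apply: (limn_esup_root_le (C := (N * N)%:R) (K := 2%:R * K%:R) (L := Lm.-1)) => //.
move=> dl n dl_gt0 dl_le1.
have raises_basis := @raises_flat_jump_basis _ _ lvl _ _ flat0 flat1.
have := gr_codim_le lvl_lt raises_basis span_L0 span_L1 n (ltW dl_gt0) dl_le1.
by rewrite !card_flat_jump_weight0 natrD.
Qed.

Section Involution.
Variables (F : fieldType) (t : nat).
Implicit Types (x : 'M[F]_t) (kd : inv_kind).

Lemma is_UT0 : is_UT (0 : 'M[F]_t).
Proof. by move=> i j _; rewrite mxE. Qed.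

Lemma is_UTN x : is_UT x -> is_UT (- x).
Proof. by move=> x_UT i j /x_UT x0; rewrite mxE x0 oppr0. Qed.

Definition symp_sign (i : 'I_t) : F := if (i < t./2)%N then 1 else -1.

Lemma inv_symp_entry x i j :
  inv_symp x i j = symp_sign i * x (rev_ord j) (rev_ord i) * symp_sign j.
Proof.
have Dsymp_entry (i' j' : 'I_t) : Dsymp F t i' j' = symp_sign i' *+ (i' == j').
  by rewrite mxE; case: eqP.
rewrite mxE (bigD1 j) //= big1 => [|k ne_kj]; last by rewrite Dsymp_entry (negbTE ne_kj) mulr0.
rewrite Dsymp_entry eqxx addr0 mxE (bigD1 i) //= big1 => [|k ne_ki].
  by rewrite Dsymp_entry eqxx addr0 mxE.
by rewrite Dsymp_entry eq_sym (negbTE ne_ki) mul0r.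
Qed.

Lemma invol_UT kd x : is_UT x -> is_UT (invol kd x).
Proof.
have orth_UT : is_UT x -> is_UT (inv_orth x).
  by move=> x_UT i j lt_ji; rewrite mxE x_UT //= !subnSK //; lia.
case: kd => x_UT /=; first exact: orth_UT.
by move=> i j lt_ji; rewrite inv_symp_entry x_UT ?mulr0 ?mul0r //= !subnSK //; lia.
Qed.

Lemma invol_diag kd x a : invol kd x a a = x (rev_ord a) (rev_ord a).
Proof.
case: kd => /=; first by rewrite mxE.
by rewrite inv_symp_entry /symp_sign; case: ifP; rewrite ?mulr1 ?mul1r ?mulrN1 ?mulN1r ?opprK.
Qed.

End Involution.

Section LevelsOfSt.
Variables (F : fieldType) (t : nat).

Definition middle (a : 'I_t) : bool := (2 * a + 1 == t)%N.

(* The right copy of the middle index (t odd) sits one level above the left one,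
   so that the free diagonal entry of y in an odd element is level-raising rather
   than flat; this saves 1 for odd t. *)
Definition St_level (c : 'I_(t + t)) : nat :=
  match split c with inl a => (2 * a)%N | inr a => (2 * a + middle a)%N end.

Lemma St_level_lshift a : St_level (lshift t a) = (2 * a)%N.
Proof. by rewrite /St_level (unsplitK (inl _ a)). Qed.

Lemma St_level_rshift a : St_level (rshift t a) = (2 * a + middle a)%N.
Proof. by rewrite /St_level (unsplitK (inr _ a)). Qed.

Lemma St_level_lt c : (St_level c < t + t)%N.
Proof.
rewrite /St_level /middle; case: split => a; have := ltn_ord a; lia.
Qed.

Lemma raises0_St_block (A B C D : 'M[F]_t) :
  is_UT A -> is_UT B -> is_UT C -> is_UT D -> (forall a, middle a -> C a a = 0) ->
  raises St_level 0 (block_mx A B C D).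
Proof.
move=> A_UT B_UT C_UT D_UT C_mid c e; rewrite addn0.
have le_of (M : 'M[F]_t) a b : is_UT M -> M a b != 0 -> (a <= b)%N.
  by move=> M_UT; apply: contraR; rewrite -ltnNge => /M_UT ->; rewrite eqxx.
case: (split_ordP c) => a ->; case: (split_ordP e) => b ->;
  rewrite ?block_mxEul ?block_mxEur ?block_mxEdl ?block_mxEdr ?St_level_lshift ?St_level_rshift.
- by move/le_of => /(_ A_UT); lia.
- by move/le_of => /(_ B_UT); lia.
- move=> nz; have := le_of _ _ _ C_UT nz.
  have [/val_inj eq_ab|ne_ab] := eqVneq (a : nat) b; last by move: ne_ab; rewrite /middle; lia.
  have not_mid : ~~ middle a by apply: contra nz => /C_mid; rewrite eq_ab => ->.
  by rewrite -eq_ab (negbTE not_mid) addn0.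
- by move/le_of => /(_ D_UT); rewrite /middle; lia.
Qed.

Lemma flatpart_St_eq (X Y : 'M[F]_(t + t)) :
  (forall a, X (lshift t a) (lshift t a) = Y (lshift t a) (lshift t a)) ->
  (forall a, X (rshift t a) (rshift t a) = Y (rshift t a) (rshift t a)) ->
  (forall a, ~~ middle a -> X (lshift t a) (rshift t a) = Y (lshift t a) (rshift t a)) ->
  (forall a, ~~ middle a -> X (rshift t a) (lshift t a) = Y (rshift t a) (lshift t a)) ->
  flatpart St_level X = flatpart St_level Y.
Proof.
move=> eq_LL eq_RR eq_LR eq_RL; apply/matrixP => c e; rewrite !mxE.
case: eqP => // eq_lvl; move: eq_lvl.
case: (split_ordP c) => a ->; case: (split_ordP e) => b ->;
  rewrite ?St_level_lshift ?St_level_rshift /middle => eq_lvl;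
  have eq_ab : a = b by apply: val_inj => /=; move: eq_lvl; lia.
all: rewrite -eq_ab; auto.
- by apply: eq_LR; rewrite /middle; lia.
- by apply: eq_RL; rewrite /middle; lia.
Qed.

End LevelsOfSt.

Arguments St_level {t} c.

Section FlatPartsOfSt.
Variables (F : fieldType) (t : nat) (kd : inv_kind).

Fact half_leq_self : (t./2 <= t)%N. Proof. lia. Qed.

Definition half_ord (i : 'I_(t./2)) : 'I_t := widen_ord half_leq_self i.

Definition St_flat0 (i : 'I_t) : 'M[F]_(t + t) :=
  block_mx (delta_mx i i) 0 0 (- invol kd (delta_mx i i)).

(* With a' = t-1-a, the involution forces y a' a' = y a a and z a' a' = - z a a,
   so pairing a with a' leaves t./2 flat directions for each of y and z. *)
Definition St_flat1 (i : 'I_(t./2) + 'I_(t./2)) : 'M[F]_(t + t) :=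
  match i with
  | inl i => let j := half_ord i in
             block_mx 0 (delta_mx j j + delta_mx (rev_ord j) (rev_ord j)) 0 0
  | inr i => let j := half_ord i in
             block_mx 0 0 (delta_mx j j - delta_mx (rev_ord j) (rev_ord j)) 0
  end.

Lemma sum_delta_diag (c : 'I_t -> F) a : \sum_i c i * delta_mx i i a a = c a.
Proof.
rewrite (bigD1 a) //= big1 => [|i ne_ia]; first by rewrite mxE eqxx mulr1 addr0.
by rewrite mxE eq_sym (negbTE ne_ia) mulr0.
Qed.

Lemma sum_half_delta (G : 'I_t -> F) a :
  \sum_(i < t./2) G (half_ord i) * delta_mx (half_ord i) (half_ord i) a a =
  if (a < t./2)%N then G a else 0.
Proof.
case: ifP => [lt_a|ge_a].
  rewrite (bigD1 (Ordinal lt_a)) //= big1 => [|i ne_i].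
    by rewrite mxE (_ : half_ord _ = a) ?eqxx ?mulr1 ?addr0 //; apply: val_inj.
  rewrite mxE (_ : (a == half_ord i) = false) ?mulr0 //.
  by apply: contraNF ne_i => /eqP eq_a; apply/eqP/val_inj; rewrite /= eq_a.
rewrite big1 // => i _; rewrite mxE (_ : (a == half_ord i) = false) ?mulr0 //.
by apply: contraFF ge_a => /eqP ->; rewrite /half_ord /=.
Qed.

Lemma rev_lt_half (a : 'I_t) : ~~ middle a -> (rev_ord a < t./2)%N = ~~ (a < t./2)%N.
Proof. by rewrite /middle /=; have := ltn_ord a; lia. Qed.

Lemma sum_half_pair (G : 'I_t -> F) (s : F) (a : 'I_t) : ~~ middle a ->
  \sum_(i < t./2) G (half_ord i) * (delta_mx (half_ord i) (half_ord i)
                      + s *: delta_mx (rev_ord (half_ord i)) (rev_ord (half_ord i))) a a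
  = if (a < t./2)%N then G a else s * G (rev_ord a).
Proof.
move=> not_mid.
have pair_entry (j : 'I_t) :
    (delta_mx j j + s *: delta_mx (rev_ord j) (rev_ord j)) a a =
    delta_mx j j a a + s * delta_mx j j (rev_ord a) (rev_ord a) :> F.
  by rewrite !mxE (can2_eq rev_ordK rev_ordK).
under eq_bigr do rewrite pair_entry mulrDr mulrCA.
rewrite big_split /= -mulr_sumr !sum_half_delta rev_lt_half //.
by case: ifP; rewrite ?mulr0 ?addr0 ?add0r.
Qed.

Lemma St_even_flat (X : 'M[F]_(t + t)) : St_even kd X ->
  raises St_level 0 X /\
  exists c, flatpart St_level X = flatpart St_level (\sum_i c i *: St_flat0 i).
Proof.
case=> x [x_UT ->]; split.
  apply: raises0_St_block; [exact: x_UT|exact: is_UT0|exact: is_UT0|exact/is_UTN/invol_UT|].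
  by move=> a _; rewrite mxE.
exists (fun i => x i i); apply: flatpart_St_eq => a; rewrite summxE.
- under eq_bigr do rewrite mxE block_mxEul.
  by rewrite block_mxEul sum_delta_diag.
- under eq_bigr do rewrite mxE block_mxEdr mxE invol_diag mulrN.
  by rewrite block_mxEdr mxE invol_diag sumrN sum_delta_diag.
- under eq_bigr do rewrite mxE block_mxEur mxE mulr0.
  by rewrite block_mxEur mxE big1.
- under eq_bigr do rewrite mxE block_mxEdl mxE mulr0.
  by rewrite block_mxEdl mxE big1.
Qed.

Hypothesis F_char0 : [pchar F] =i pred0.

Lemma St_odd_flat (X : 'M[F]_(t + t)) : St_odd kd X ->
  raises St_level 0 X /\
  exists c, flatpart St_level X = flatpart St_level (\sum_i c i *: St_flat1 i).
Proof.
case=> y [z [y_UT y_sym z_UT z_skew ->]].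
have z_diag a : z (rev_ord a) (rev_ord a) = - z a a.
  by rewrite -(invol_diag kd) z_skew mxE.
split.
  apply: raises0_St_block; [exact: is_UT0|exact: y_UT|exact: z_UT|exact: is_UT0|] => a mid_a.
  have rev_a : rev_ord a = a by apply: val_inj => /=; move: mid_a; rewrite /middle; lia.
  have /eqP : z a a = - z a a by rewrite -[in LHS]rev_a z_diag.
  rewrite -addr_eq0 -mulr2n -mulr_natl mulf_eq0 => /orP [|/eqP //].
  by move/pcharf0P: F_char0 => ->.
have y_diag a : y (rev_ord a) (rev_ord a) = y a a by rewrite -(invol_diag kd) y_sym.
exists (fun i => match i with
                 | inl i => y (half_ord i) (half_ord i)
                 | inr i => z (half_ord i) (half_ord i)
                 end).
apply: flatpart_St_eq => a; rewrite summxE big_sumType /=.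
- under eq_bigr do rewrite mxE block_mxEul mxE mulr0.
  under [X in _ + X]eq_bigr do rewrite mxE block_mxEul mxE mulr0.
  by rewrite !big1_eq addr0 block_mxEul mxE.
- under eq_bigr do rewrite mxE block_mxEdr mxE mulr0.
  under [X in _ + X]eq_bigr do rewrite mxE block_mxEdr mxE mulr0.
  by rewrite !big1_eq addr0 block_mxEdr mxE.
- move=> not_mid.
  under eq_bigr do rewrite mxE block_mxEur -[delta_mx (rev_ord _) _]scale1r.
  under [X in _ + X]eq_bigr do rewrite mxE block_mxEur mxE mulr0.
  rewrite big1_eq addr0 (sum_half_pair (fun j => y j j)) // block_mxEur mul1r y_diag.
  by rewrite if_same.
- move=> not_mid.
  under eq_bigr do rewrite mxE block_mxEdl mxE mulr0.
  under [X in _ + X]eq_bigr do rewrite mxE block_mxEdl -scaleN1r.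
  rewrite big1_eq add0r (sum_half_pair (fun j => z j j)) // block_mxEdl z_diag mulN1r opprK.
  by rewrite if_same.
Qed.

End FlatPartsOfSt.

Theorem proposition3 (F : fieldType) (R : realType) (t : nat) (kd : inv_kind) :
  [pchar F] =i pred0 ->
  (2 <= t)%N ->
  (kd = Symplectic -> ~~ odd t) ->
  (limn_esup (fun n : nat =>
      ((@gr_codim F (t + t) (@St_even F t kd) (@St_odd F t kd) n)%:R `^ (n%:R^-1) : R)%:E)
   <= (if odd t then (2 * t - 1)%:R else (2 * t)%:R)%:E)%E.
Proof.
move=> F_char0 _ _.
have -> : (if odd t then (2 * t - 1)%:R else (2 * t)%:R) =
          (#|'I_t| + #|{: 'I_(t./2) + 'I_(t./2)}|)%:R :> R.
  rewrite card_sum !card_ord; have := odd_double_half t.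
  by case: (odd t) => /= eq_t; congr (_%:R); lia.
apply: (limn_esup_gr_codim_le R (lvl := St_level) (Lm := t + t)) => [c|X|X].
- exact: St_level_lt.
- exact: St_even_flat.
- exact: St_odd_flat.
Qed.
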